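(* Let $G$ be a finite connected graph that is fractionally tiled by a single edge $H=K_2$. Let $f(K)$ denote the number of matchings of a graph $K$. Then $$f(G)^{1/|G|}\ge f(H)^{1/|H|}=2^{1/2}.$$
   Context: A matching is a set of pairwise vertex-disjoint edges (the empty matching counts, so $f(K_2)=2$). $|K|$ is the number of vertices. $H$ fractionally tiles $G$ means there is a finite list of subgraphs of $G$ isomorphic to $H$ such that every vertex of $G$ is covered by the same number of them. *)

From mathcomp Require Import all_boot all_order all_algebra.
From mathcomp Require Import all_classical all_reals all_analysis.
Set Implicit Arguments. Unset Strict Implicit. Unset Printing Implicit Defensive.

Definition simple_graph (T : finType) (e : rel T) : Prop :=
  symmetric e /\ irreflexive e.

Definition connected_graph (T : finType) (e : rel T) : Prop :=
  0 < #|T| /\ forall x y : T, connect e x y.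

Definition is_edge (T : finType) (e : rel T) (A : {set T}) : bool :=
  [exists x : T, [exists y : T, e x y && (A == [set x; y])]].

Definition is_matching (T : finType) (e : rel T) (M : {set {set T}}) : bool :=
  [forall A in M, is_edge e A] &&
  [forall A in M, forall B in M, (A != B) ==> [disjoint A & B]].

Definition num_matchings (T : finType) (e : rel T) : nat :=
  #|[set M : {set {set T} } | is_matching e M]|.

(* K_2 fractionally tiles G: a finite (nonempty) list of subgraphs of G isomorphic
   to K_2 -- i.e. edges {x,y} of G, repetitions allowed -- such that every vertex
   is covered by the same number of them. *)
Definition K2_fractionally_tiles (T : finType) (e : rel T) : Prop :=
  exists s : seq {set T},
    s != [::] /\ all (is_edge e) s /\
    exists k : nat, forall v : T, count (fun A : {set T} => v \in A) s = k.

(* Spreading each tile of the K2-tiling over its edge with weight 1/k, where k is the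
   number of tiles at each vertex, gives a fractional perfect matching w.  Write F(U)
   for the number of matchings inside U and W(U) for the total weight of the ordered
   pairs inside U.  Then 2^(W(U)/2) <= F(U) by induction on U: deleting a vertex v,
   F(U) >= F(U - v) + sum_u F(U - v - u) over the neighbours u of v, and as the
   weights L = sum_u w(v,u) at v add up to at most 1, the elementary bound
   2^L <= 1 + sum_u 2^(w(v,u) - 1) closes the induction.  For U = G, W(U) = |G|. *)

From mathcomp Require Import all_boot all_order all_algebra.
From mathcomp Require Import all_classical all_reals all_analysis.
From mathcomp Require Import fintype finset.
From mathcomp Require Import lra.
Import Order.TTheory GRing.Theory Num.Theory.

Set Implicit Arguments.
Unset Strict Implicit.
Unset Printing Implicit Defensive.

Lemma card_set_pairs (I J : finType) (P : I -> J -> bool) :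
  #|[set p : I * J | P p.1 p.2]| = (\sum_i #|[set y | P i y]|)%N.
Proof.
rewrite -sum1_card (eq_bigl (fun p => xpredT p.1 && P p.1 p.2)) => [|p]; last by rewrite inE.
rewrite -(pair_big_dep xpredT P (fun _ _ => 1%N)); apply: eq_bigr => i _.
by rewrite -sum1_card; apply: eq_bigl => j; rewrite inE.
Qed.

Section Matchings.
Variables (T : finType) (e : rel T).
Hypothesis e_simple : simple_graph e.

Definition matchings_in (U : {set T}) : {set {set {set T}}} :=
  [set M | is_matching e M & [forall A in M, A \subset U]].

Definition num_matchings_in (U : {set T}) : nat := #|matchings_in U|.

Lemma matchings_inP (U : {set T}) (M : {set {set T}}) :
  reflect [/\ {in M, forall A : {set T}, is_edge e A},
              {in M &, forall A B : {set T}, A != B -> [disjoint A & B]} &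
              {in M, forall A : {set T}, A \subset U}]
          (M \in matchings_in U).
Proof.
rewrite inE; apply: (iffP idP).
  case/andP=> /andP[/forall_inP Medge /forall_inP Mdis] /forall_inP Msub.
  by split=> // A B AM BM; apply/implyP/(forall_inP (Mdis A AM)).
case=> Medge Mdis Msub; rewrite -andbA; apply/and3P; split.
- exact/forall_inP.
- by apply/forall_inP=> A AM; apply/forall_inP=> B BM; apply/implyP/Mdis.
- exact/forall_inP.
Qed.

Lemma num_matchings_in_setT : num_matchings_in [set: T] = num_matchings e.
Proof.
apply: eq_card=> M; rewrite !inE; case: is_matching=> //=.
by apply/forall_inP=> A _; apply: subsetT.
Qed.

Lemma num_matchings_in_gt0 U : (0 < num_matchings_in U)%N.
Proof.
by rewrite card_gt0; apply/set0Pn; exists set0; apply/matchings_inP; split=> ?; rewrite inE.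
Qed.

Lemma matchings_in_avoid (U : {set T}) M A x :
  M \in matchings_in U -> A \in M -> x \notin U -> x \notin A.
Proof. by case/matchings_inP=> _ _ Msub AM; apply: contra; apply/subsetP/Msub. Qed.

Lemma matchings_in_sub (U W : {set T}) : U \subset W -> {subset matchings_in U <= matchings_in W}.
Proof.
move=> sUW M /matchings_inP[Medge Mdis Msub]; apply/matchings_inP; split=> // A AM.
exact: subset_trans (Msub A AM) sUW.
Qed.

Lemma is_edge_set2P x y : reflect (e x y) (is_edge e [set x; y]).
Proof.
have [e_sym e_irr] := e_simple.
apply: (iffP idP)=> [|exy]; last by apply/existsP; exists x; apply/existsP; exists y; rewrite exy /=.
case/existsP=> a /existsP[b /andP[eab /eqP E]].
have : a \in [set x; y] by rewrite E set21.
have : b \in [set x; y] by rewrite E set22.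
rewrite !inE=> /orP[]/eqP Eb /orP[]/eqP Ea; by move: eab; rewrite Ea Eb ?e_irr // e_sym.
Qed.

Lemma matchings_in_add_edge (U : {set T}) M u v :
  e u v -> u \in U -> v \in U -> M \in matchings_in (U :\ v :\ u) ->
  [set u; v] |: M \in matchings_in U.
Proof.
move=> euv uU vU MU; have [Medge Mdis Msub] := matchings_inP _ _ MU.
have disj_uv A : A \in M -> [disjoint [set u; v] & A].
  move=> AM; rewrite disjoints_subset subUset !sub1set !inE.
  by rewrite !(matchings_in_avoid MU AM) // !inE eqxx ?andbF.
apply/matchings_inP; split.
- by move=> A; rewrite in_setU1=> /predU1P[->|/Medge//]; apply/is_edge_set2P.
- move=> A B; rewrite !in_setU1=> /predU1P[->|AM] /predU1P[->|BM]; rewrite ?eqxx //.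
  + by move=> _; apply: disj_uv.
  + by move=> _; rewrite disjoint_sym disj_uv.
  + exact: Mdis.
- move=> A; rewrite in_setU1=> /predU1P[->|AM]; first by rewrite subUset !sub1set uU vU.
  exact: subset_trans (Msub A AM) (subset_trans (subD1set _ _) (subD1set _ _)).
Qed.

Section DeleteVertex.
Variables (U : {set T}) (v : T).
Hypothesis vU : v \in U.

Local Notation N := [set u in U :\ v | e v u].

(* (v, M) stands for a matching M avoiding v, and (u, M) for M extended by the edge uv. *)
Definition attach (p : T * {set {set T}}) : {set {set T}} :=
  if p.1 == v then p.2 else [set p.1; v] |: p.2.

Definition attachable (u : T) (M : {set {set T}}) : bool :=
  if u == v then M \in matchings_in (U :\ v)
  else (u \in N) && (M \in matchings_in (U :\ v :\ u)).

Definition attach_dom : {set T * {set {set T}}} := [set p | attachable p.1 p.2].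

Lemma card_attach_dom :
  #|attach_dom| =
    (num_matchings_in (U :\ v) + \sum_(u in N) num_matchings_in (U :\ v :\ u))%N.
Proof.
rewrite card_set_pairs (bigD1 v) //= /attachable eqxx; congr (_ + _)%N.
  by apply: eq_card=> M; rewrite inE.
have vN : v \notin N by rewrite !inE eqxx.
rewrite [RHS]big_mkcond [RHS](bigD1 v) //= (negbTE vN) add0n.
apply: eq_bigr=> u /negbTE ->; case: ifP=> _; last by apply/eqP; rewrite cards_eq0.
by apply: eq_card=> M; rewrite inE.
Qed.

Lemma attach_dom_avoid p A : p \in attach_dom -> A \in p.2 -> v \notin A.
Proof.
rewrite inE /attachable; case: ifP=> [_ Mp|_ /andP[_ Mp]] Ap;
  by apply: (matchings_in_avoid Mp Ap); rewrite !inE eqxx ?andbF.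
Qed.

Lemma attach_in_matchings p : p \in attach_dom -> attach p \in matchings_in U.
Proof.
rewrite inE /attachable /attach; case: eqP=> [_|_ /andP[uN Mp]].
  by apply: matchings_in_sub; apply: subD1set.
rewrite !inE in uN; case/andP: uN=> /andP[_ uU] evu.
by apply: matchings_in_add_edge=> //; rewrite (proj1 e_simple).
Qed.

Lemma attach_inj : {in attach_dom &, injective attach}.
Proof.
have fresh p x : p \in attach_dom -> [set x; v] \notin p.2.
  by move=> pD; apply/negP=> /(attach_dom_avoid pD); rewrite !inE eqxx orbT.
move=> [u1 M1] [u2 M2] D1 D2; rewrite /attach /=.
case: eqP=> [->|/eqP n1]; case: eqP=> [->|/eqP n2] E.
- by rewrite E.
- by case/negP: (fresh _ u2 D1); rewrite E setU11.
- by case/negP: (fresh _ u1 D2); rewrite -E setU11.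
have u12 : u1 = u2.
  have : [set u1; v] \in [set u2; v] |: M2 by rewrite -E setU11.
  rewrite in_setU1 (negbTE (fresh _ u1 D2)) orbF=> /eqP E12.
  by move: (set21 u1 v); rewrite E12 !inE (negbTE n1) orbF=> /eqP.
subst u2; congr (_, _).
have F1 : [set u1; v] \notin M1 := fresh _ u1 D1.
by rewrite -(setU1K F1) E setU1K ?(fresh _ u1 D2).
Qed.

Lemma num_matchings_in_delete_vertex :
  (num_matchings_in (U :\ v) + \sum_(u in N) num_matchings_in (U :\ v :\ u)
     <= num_matchings_in U)%N.
Proof.
rewrite -card_attach_dom -(card_in_imset attach_inj).
by apply/subset_leq_card/subsetP=> _ /imsetP[p pD ->]; apply: attach_in_matchings.
Qed.

End DeleteVertex.
End Matchings.

Local Open Scope ring_scope.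

Section PowersOfTwo.
Variable R : realType.

Lemma powR2D (x y : R) : 2 `^ (x + y) = 2 `^ x * 2 `^ y.
Proof. by rewrite powRD // pnatr_eq0 implybT. Qed.

Lemma ler_powR2 (x y : R) : x <= y -> 2 `^ x <= 2 `^ y.
Proof. by apply: ler_powR; rewrite ler1n. Qed.

Lemma powR2_subr1 (x : R) : 2 `^ (x - 1) * 2 = 2 `^ x.
Proof. by rewrite -[X in _ * X]powRr1 ?ler0n // -powR2D subrK. Qed.

Lemma powR2_sum_le (I : finType) (N : {set I}) (x : I -> R) :
  (forall i, 0 <= x i) -> \sum_(i in N) x i <= 1 ->
  2 `^ (\sum_(i in N) x i) <= 1 + \sum_(i in N) 2 `^ (x i - 1).
Proof.
move=> x_ge0 sum_le1.
have half_le i : 1 <= 2 `^ (x i - 1) * 2.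
  by rewrite powR2_subr1 -[leLHS](powRr0 (2 : R)); apply: ler_powR2.
have [->|[u1 u1N]] := set_0Vmem N; first by rewrite !big_set0 powRr0 addr0.
have [N1|[u2 u2N]] := set_0Vmem (N :\ u1).
  move: sum_le1; rewrite !(big_setD1 u1 u1N) N1 !big_set0 /= !addr0 => x1_le1.
  have : 2 `^ (x u1 - 1) <= 1.
    by rewrite -[leRHS](powRr0 (2 : R)); apply: ler_powR2; rewrite subr_le0.
  by move=> ?; rewrite -[leLHS]powR2_subr1; lra.
apply: le_trans (ler_powR2 sum_le1) _; rewrite powRr1 ?ler0n //.
rewrite (big_setD1 u1 u1N) (big_setD1 u2 u2N) /=.
have := half_le u1; have := half_le u2.
have : 0 <= \sum_(i in N :\ u1 :\ u2) 2 `^ (x i - 1).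
  by apply: sumr_ge0=> i _; apply: powR_ge0.
lra.
Qed.

End PowersOfTwo.

Section FractionalMatching.
Variables (R : realType) (T : finType) (e : rel T).
Hypothesis e_simple : simple_graph e.
Variable w : T -> T -> R.
Hypothesis w_ge0 : forall u t, 0 <= w u t.
Hypothesis w_sym : forall u t, w u t = w t u.
Hypothesis w_edge : forall u t, ~~ e u t -> w u t = 0.
Hypothesis w_row : forall u, \sum_t w u t <= 1.

Definition weight (U : {set T}) : R := \sum_(u in U) \sum_(t in U) w u t.

Lemma weightD1 (U : {set T}) v : v \in U ->
  weight U = weight (U :\ v) + 2 * \sum_(t in U) w v t.
Proof.
move=> vU; have wvv : w v v = 0 by apply: w_edge; rewrite (proj2 e_simple).
have row_v : \sum_(t in U) w v t = \sum_(t in U :\ v) w v t.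
  by rewrite (big_setD1 v vU) /= wvv add0r.
have row_u u : \sum_(t in U) w u t = w v u + \sum_(t in U :\ v) w u t.
  by rewrite (big_setD1 v vU) /= w_sym.
rewrite /weight (big_setD1 v vU) /= (eq_bigr _ (fun u _ => row_u u)) row_v.
rewrite big_split /=; lra.
Qed.

Lemma row_le1 (U : {set T}) u : \sum_(t in U) w u t <= 1.
Proof.
apply: le_trans (w_row u); rewrite [leRHS](bigID (mem U)) /= lerDl.
by apply: sumr_ge0.
Qed.

Lemma weightD1D1 (U : {set T}) v u : v \in U -> u \in U :\ v ->
  weight U - 2 * \sum_(t in U) w v t - 2 + 2 * w v u <= weight (U :\ v :\ u).
Proof.
move=> vU uU'; rewrite (weightD1 vU) (weightD1 uU').
have := row_le1 U u; rewrite (big_setD1 v vU) /= w_sym; lra.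
Qed.

Lemma row_neighbours (U : {set T}) v : v \in U ->
  \sum_(t in U) w v t = \sum_(u in [set u in U :\ v | e v u]) w v u.
Proof.
move=> vU; rewrite (bigID (e v)) /= [X in _ + X]big1 ?addr0 => [|t /andP[_ /w_edge]//].
apply: eq_bigl=> t; rewrite !inE; case: (t =P v)=> [->|_] //=.
by rewrite (proj2 e_simple) andbF.
Qed.

Lemma powR2_weight_le U : 2 `^ (weight U / 2) <= (num_matchings_in e U)%:R.
Proof.
elim: {U}_.+1 {-2}U (ltnSn #|U|)=> // n IH U; rewrite ltnS=> cardU.
have [->|[v vU]] := set_0Vmem U.
  by rewrite /weight big_set0 mul0r powRr0 ler1n num_matchings_in_gt0.
set N := [set u in U :\ v | e v u]; set L := \sum_(t in U) w v t.
have cardU' : (#|U :\ v| < n)%N by rewrite (cardsD1 v U) vU in cardU.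
have cardU'' u : (#|U :\ v :\ u| < n)%N.
  exact: leq_ltn_trans (subset_leq_card (subD1set _ _)) cardU'.
have bound_v : 2 `^ (weight U / 2 - L) <= (num_matchings_in e (U :\ v))%:R.
  by apply: le_trans _ (IH _ cardU'); apply: ler_powR2; rewrite (weightD1 vU) -/L; lra.
have bound_u u : u \in N ->
    2 `^ (weight U / 2 - L + (w v u - 1)) <= (num_matchings_in e (U :\ v :\ u))%:R.
  move=> uN; apply: le_trans _ (IH _ (cardU'' u)); apply: ler_powR2.
  have uU' : u \in U :\ v by move: uN; rewrite inE=> /andP[].
  by have := weightD1D1 vU uU'; rewrite -/L; lra.
apply: le_trans (_ : _ <= (num_matchings_in e (U :\ v)
    + \sum_(u in N) num_matchings_in e (U :\ v :\ u))%N%:R) _; last first.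
  by rewrite ler_nat (num_matchings_in_delete_vertex e_simple vU).
rewrite natrD natr_sum -[weight U / 2](subrK L) powR2D.
apply: le_trans (_ : _ <= 2 `^ (weight U / 2 - L) * (1 + \sum_(u in N) 2 `^ (w v u - 1))) _.
  rewrite ler_wpM2l ?powR_ge0 // /L row_neighbours //.
  by apply: powR2_sum_le; rewrite -?row_neighbours ?row_le1.
rewrite mulrDr mulr1 mulr_sumr; apply: lerD bound_v _.
by apply: ler_sum=> u uN; rewrite -powR2D; apply: bound_u.
Qed.

End FractionalMatching.

Definition fractional_perfect_matching (R : realType) (T : finType) (e : rel T)
    (w : T -> T -> R) : Prop :=
  [/\ (forall u t, 0 <= w u t), (forall u t, w u t = w t u),
      (forall u t, ~~ e u t -> w u t = 0) & (forall u, \sum_t w u t = 1)].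

Lemma weight_setT (R : realType) (T : finType) (w : T -> T -> R) :
  (forall u, \sum_t w u t = 1) -> weight w [set: T] = #|T|%:R.
Proof.
move=> w_row; rewrite /weight (eq_bigr (fun _ => 1)) => [|u _].
  by rewrite sumr_const cardsT.
by rewrite -(w_row u); apply: eq_bigl=> t; rewrite inE.
Qed.

Lemma fractional_perfect_matching_bound (R : realType) (T : finType) (e : rel T)
    (w : T -> T -> R) :
  simple_graph e -> fractional_perfect_matching e w ->
  (2 : R) `^ (#|T|%:R / 2) <= (num_matchings e)%:R.
Proof.
move=> e_simple [w_ge0 w_sym w_edge w_row].
rewrite -num_matchings_in_setT -(weight_setT w_row).
by apply: powR2_weight_le=> // u; rewrite w_row.
Qed.

Section EdgeTilings.
Variables (T : finType) (e : rel T).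
Hypothesis e_simple : simple_graph e.

Lemma set2_eq_set2l (x y t : T) : x != y -> ([set x; y] == [set x; t]) = (t == y).
Proof.
move=> xy; apply/eqP/eqP=> [E|->//].
have : y \in [set x; t] by rewrite -E set22.
by rewrite !inE eq_sym (negbTE xy)=> /eqP.
Qed.

Lemma sum_set2_eq (u : T) (A : {set T}) :
  is_edge e A -> (\sum_t (A == [set u; t]) = (u \in A))%N.
Proof.
case/existsP=> x /existsP[y /andP[exy /eqP ->]].
have xy : x != y by apply: contraTneq exy=> ->; rewrite (proj2 e_simple).
have sum_one (a b : T) : a != b -> (\sum_t ([set a; b] == [set a; t]) = 1)%N.
  move=> ab; rewrite (bigD1 b) //= eqxx big1 // => t tb.
  by rewrite set2_eq_set2l // (negbTE tb).
rewrite !inE; have [->|ux] := eqVneq u x; first exact: sum_one.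
have [->|uy] := eqVneq u y; first by rewrite setUC sum_one // eq_sym.
rewrite big1 // => t _; apply/eqP; rewrite eqb0; apply/eqP=> E.
by move: (set21 u t); rewrite -E !inE (negbTE ux) (negbTE uy).
Qed.

Lemma sum_count_set2 (u : T) (s : seq {set T}) : all (is_edge e) s ->
  (\sum_t count (pred1 [set u; t]) s = count (fun A : {set T} => u \in A) s)%N.
Proof.
elim: s=> [|A s IH] /=; first by rewrite big1.
by case/andP=> eA es; rewrite big_split /= IH // sum_set2_eq.
Qed.

Lemma count_set2_nonedge (u t : T) (s : seq {set T}) : all (is_edge e) s -> ~~ e u t ->
  count (pred1 [set u; t]) s = 0%N.
Proof.
move=> /allP es ne_ut; apply/count_memPn; apply: contra ne_ut=> /es.
by move/(is_edge_set2P e_simple).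
Qed.

Lemma K2_tiling_fractional_perfect_matching (R : realType) :
  K2_fractionally_tiles e -> exists w : T -> T -> R, fractional_perfect_matching e w.
Proof.
case=> s [s_nil [s_edges [k s_reg]]].
have k_gt0 : (0 < k)%N.
  case: s s_nil s_edges s_reg=> [//|A s] _ /= /andP[/existsP[x /existsP[y /andP[_ /eqP EA]]] _].
  by move=> s_reg; rewrite -(s_reg x) /= EA set21.
exists (fun u t => (count (pred1 [set u; t]) s)%:R / k%:R); split.
- by move=> u t; rewrite divr_ge0.
- by move=> u t; rewrite setUC.
- by move=> u t /(count_set2_nonedge s_edges) ->; rewrite mul0r.
- move=> u; rewrite -mulr_suml -natr_sum sum_count_set2 // s_reg.
  by rewrite divff // pnatr_eq0 -lt0n.
Qed.

End EdgeTilings.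

Lemma powR_le_root (R : realType) (a b n : R) :
  0 <= a -> 0 <= b -> 0 < n -> a `^ n <= b -> a <= b `^ n^-1.
Proof.
move=> a_ge0 b_ge0 n_gt0 anb.
rewrite -{1}(powRr1 a_ge0) -(mulfV (lt0r_neq0 n_gt0)) powRrM.
by apply: ge0_ler_powR; rewrite ?nnegrE ?invr_ge0 ?powR_ge0 // ltW.
Qed.

Theorem mainTheorem13 (R : realType) (T : finType) (e : rel T) :
  simple_graph e -> connected_graph e -> K2_fractionally_tiles e ->
  (num_matchings e)%:R `^ (#|T|%:R^-1) >= (2 : R) `^ (2%:R^-1 : R).
Proof.
(* Connectivity is only used to know that G has a vertex. *)
move=> e_simple [T_gt0 _] tiling.
have [w w_perfect] := K2_tiling_fractional_perfect_matching e_simple R tiling.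
have := fractional_perfect_matching_bound e_simple w_perfect.
rewrite mulrC powRrM=> bound.
by apply: powR_le_root bound; rewrite ?powR_ge0 ?ltr0n.
Qed.
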